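(* Let $\bar u\in\mathbb{R}^n_{\ge 0}$, $\mathcal{X}=[0,\bar u]$, and let $f:\mathcal{X}\to\mathbb{R}$ be differentiable, nonnegative, DR-submodular and $\mu$-strongly DR-submodular for some $\mu\ge0$. Let $\mathcal{P}\subseteq\mathcal{X}$ be a nonempty compact convex down-closed set and let $x^*\in\arg\max_{x\in\mathcal{P}}f(x)$. Let $x\in\mathcal{P}$, let $\mathcal{Q}:=\{y\in\mathcal{P}: y\le \bar u-x\}$, and let $z\in\mathcal{Q}$. Define $z^*:=x\vee x^*-x$. Then $$\max\{f(x),f(z)\}\;\ge\;\frac14\big[f(x^* )-g_{\mathcal{P}}(x)-g_{\mathcal{Q}}(z)\big]+\frac{\mu}{8}\big(\|x-x^*\|^2+\|z-z^*\|^2\big).$$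
   Context: Vector inequalities are componentwise; $\vee,\wedge$ are coordinatewise max/min; $\|\cdot\|$ is the Euclidean norm. A set $\mathcal{P}\subseteq[0,\bar u]$ is down-closed if $x\in\mathcal{P}$ and $0\le y\le x$ imply $y\in\mathcal{P}$. DR-submodular: for all $a\le b$ in $\mathcal{X}$, $i\in[n]$, $k\ge0$ with $a+ke_i,b+ke_i\in\mathcal{X}$, $f(a+ke_i)-f(a)\ge f(b+ke_i)-f(b)$. $\mu$-strongly DR-submodular: for all $x\in\mathcal{X}$ and $v\in\mathbb{R}^n_{\ge0}\cup(-\mathbb{R}^n_{\ge0})$ with $x+v\in\mathcal{X}$, $f(x+v)\le f(x)+\langle\nabla f(x),v\rangle-\frac{\mu}{2}\|v\|^2$. For a compact set $\mathcal{C}\subseteq\mathcal{X}$ and $w\in\mathcal{C}$, the non-stationarity is $g_{\mathcal{C}}(w):=\max_{v\in\mathcal{C}}\langle v-w,\nabla f(w)\rangle$. *)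

From Stdlib Require Import Reals.
From mathcomp Require Import all_boot.

Set Implicit Arguments.
Unset Strict Implicit.
Unset Printing Implicit Defensive.

Local Open Scope R_scope.

Definition vec (n : nat) := 'I_n -> R.

Definition vzero (n : nat) : vec n := fun _ => 0.
Definition vadd (n : nat) (x y : vec n) : vec n := fun i => x i + y i.
Definition vsub (n : nat) (x y : vec n) : vec n := fun i => x i - y i.
Definition vscale (n : nat) (t : R) (x : vec n) : vec n := fun i => t * x i.
Definition vmax (n : nat) (x y : vec n) : vec n := fun i => Rmax (x i) (y i).
Definition unitv (n : nat) (i : 'I_n) (k : R) : vec n :=
  fun j => if j == i then k else 0.

Definition vle (n : nat) (x y : vec n) : Prop := forall i, x i <= y i.

Definition dot (n : nat) (x y : vec n) : R := \big[Rplus/0]_(i < n) (x i * y i).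
Definition sqnorm (n : nat) (x : vec n) : R := dot x x.
Definition norm (n : nat) (x : vec n) : R := sqrt (sqnorm x).

Definition box (n : nat) (ub : vec n) (x : vec n) : Prop :=
  vle (@vzero n) x /\ vle x ub.

Definition differentiable_on_with_grad (n : nat) (X : vec n -> Prop)
    (f : vec n -> R) (grad : vec n -> vec n) : Prop :=
  forall x, X x -> forall eps, 0 < eps -> exists delta, 0 < delta /\
    forall y, X y -> norm (vsub y x) < delta ->
      Rabs (f y - f x - dot (grad x) (vsub y x)) <= eps * norm (vsub y x).

Definition nonneg_on (n : nat) (X : vec n -> Prop) (f : vec n -> R) : Prop :=
  forall x, X x -> 0 <= f x.

Definition DR_submodular (n : nat) (X : vec n -> Prop) (f : vec n -> R) : Prop :=
  forall a b, X a -> X b -> vle a b -> forall (i : 'I_n) (k : R), 0 <= k ->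
    X (vadd a (unitv i k)) -> X (vadd b (unitv i k)) ->
    f (vadd a (unitv i k)) - f a >= f (vadd b (unitv i k)) - f b.

Definition strongly_DR_submodular (n : nat) (X : vec n -> Prop) (f : vec n -> R)
    (grad : vec n -> vec n) (mu : R) : Prop :=
  forall x v, X x -> (vle (@vzero n) v \/ vle v (@vzero n)) -> X (vadd x v) ->
    f (vadd x v) <= f x + dot (grad x) v - mu / 2 * sqnorm v.

Definition convex_set (n : nat) (P : vec n -> Prop) : Prop :=
  forall x y t, P x -> P y -> 0 <= t <= 1 ->
    P (vadd (vscale t x) (vscale (1 - t) y)).

Definition closed_set (n : nat) (P : vec n -> Prop) : Prop :=
  forall (s : nat -> vec n) x, (forall k, P (s k)) ->
    Un_cv (fun k => norm (vsub (s k) x)) 0 -> P x.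

Definition bounded_set (n : nat) (P : vec n -> Prop) : Prop :=
  exists M, forall x, P x -> norm x <= M.

(* Heine-Borel: compact in R^n = closed and bounded *)
Definition compact_set (n : nat) (P : vec n -> Prop) : Prop :=
  closed_set P /\ bounded_set P.

Definition down_closed (n : nat) (P : vec n -> Prop) : Prop :=
  forall x y, P x -> vle (@vzero n) y -> vle y x -> P y.

(* m = g_C(w) = max_{v in C} <v - w, grad f(w)> *)
Definition is_nonstationarity (n : nat) (C : vec n -> Prop) (grad : vec n -> vec n)
    (w : vec n) (m : R) : Prop :=
  (exists v, C v /\ dot (vsub v w) (grad w) = m) /\
  (forall v, C v -> dot (vsub v w) (grad w) <= m).

(* Write [x ∨ x⋆] and [x ∧ x⋆] for the coordinatewise max and min, so that
   [x ∨ x⋆ - x] and [x ∧ x⋆ - x] are a nonnegative and a nonpositive step from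
   [x] adding up to [x⋆ - x], with squared norms adding up to [‖x - x⋆‖²].
   Strong DR-submodularity along both steps gives
     f(x ∨ x⋆) + f(x ∧ x⋆) <= 2 f(x) + g_P(x) - μ/2 ‖x - x⋆‖²,
   and likewise f(z ∨ z⋆) + f(z ∧ z⋆) <= 2 f(z) + g_Q(z) - μ/2 ‖z - z⋆‖², as
   [z⋆] lies in [Q].  On the other hand [x⋆ = (x ∧ x⋆) + z⋆] and
   [x ∨ x⋆ = z⋆ + x], so two applications of DR-submodularity and
   nonnegativity give f(x⋆) <= f(x ∧ x⋆) + f(x ∨ x⋆) + f(z ∨ z⋆).  Adding up
   and bounding f(x), f(z) by their maximum yields the claim. *)
From Stdlib Require Import Reals Lra FunctionalExtensionality.
From mathcomp Require Import all_boot.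
Local Open Scope R_scope.
Set Implicit Arguments.
Unset Strict Implicit.

Definition vmin (n : nat) (x y : vec n) : vec n := fun i => Rmin (x i) (y i).

Ltac coordinatewise :=
  rewrite /vadd /vsub /vmax /vmin /vzero /Rmax /Rmin;
  repeat destruct (Rle_dec _ _); lra.

Lemma big_Rplus_split n (F G : 'I_n -> R) :
  \big[Rplus/0]_(i < n) (F i + G i)
  = \big[Rplus/0]_(i < n) F i + \big[Rplus/0]_(i < n) G i.
Proof.
apply: (big_ind3 (fun a b c => a = b + c)) => [|? ? ? ? ? ? -> ->|] //; ring.
Qed.

Section VectorIdentities.

Variable n : nat.
Implicit Types x y : vec n.

Lemma vadd_vsub x y : vadd x (vsub y x) = y.
Proof. apply: functional_extensionality => i; coordinatewise. Qed.

Lemma vaddv0 x : vadd x (@vzero n) = x.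
Proof. apply: functional_extensionality => i; coordinatewise. Qed.

Lemma vadd0v x : vadd (@vzero n) x = x.
Proof. apply: functional_extensionality => i; coordinatewise. Qed.

Lemma vsub_vmax_ge0 x y : vle (@vzero n) (vsub (vmax x y) x).
Proof. move=> i; coordinatewise. Qed.

Lemma vsub_vmin_le0 x y : vle (vsub (vmin x y) x) (@vzero n).
Proof. move=> i; coordinatewise. Qed.

Lemma vadd_vmin_vsub_vmax x y : vadd (vmin x y) (vsub (vmax x y) x) = y.
Proof. apply: functional_extensionality => i; coordinatewise. Qed.

Lemma vadd_vsub_vmax x y : vadd (vsub (vmax x y) x) x = vmax x y.
Proof. apply: functional_extensionality => i; coordinatewise. Qed.

Lemma dot_vsub_vmax_vmin (g : vec n) x y :
  dot g (vsub (vmax x y) x) + dot g (vsub (vmin x y) x) = dot (vsub y x) g.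
Proof.
rewrite /dot -big_Rplus_split; apply: eq_bigr => i _.
rewrite /vsub /vmax /vmin /Rmax /Rmin; destruct (Rle_dec _ _); ring.
Qed.

Lemma sqnorm_vsub_vmax_vmin x y :
  sqnorm (vsub (vmax x y) x) + sqnorm (vsub (vmin x y) x) = sqnorm (vsub x y).
Proof.
rewrite /sqnorm /dot -big_Rplus_split; apply: eq_bigr => i _.
rewrite /vsub /vmax /vmin /Rmax /Rmin; destruct (Rle_dec _ _); ring.
Qed.

End VectorIdentities.

Section Box.

Variables (n : nat) (ub : vec n).
Implicit Types x y : vec n.

Lemma box_vzero x : box ub x -> box ub (@vzero n).
Proof. by move=> [x0 xu]; split=> // i; move: (x0 i) (xu i); rewrite /vzero; lra. Qed.

Lemma box_vmax x y : box ub x -> box ub y -> box ub (vmax x y).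
Proof.
move=> [x0 xu] [y0 yu]; split=> i; move: (x0 i) (xu i) (y0 i) (yu i); coordinatewise.
Qed.

Lemma box_vmin x y : box ub x -> box ub y -> box ub (vmin x y).
Proof.
move=> [x0 xu] [y0 yu]; split=> i; move: (x0 i) (xu i) (y0 i) (yu i); coordinatewise.
Qed.

Lemma box_vsub_vmax x y : box ub x -> box ub y -> box ub (vsub (vmax x y) x).
Proof.
move=> [x0 xu] [y0 yu]; split=> i; move: (x0 i) (xu i) (y0 i) (yu i); coordinatewise.
Qed.

Lemma vsub_vmax_le x y : box ub x -> box ub y -> vle (vsub (vmax x y) x) y.
Proof. move=> [x0 _] [y0 _] i; move: (x0 i) (y0 i); coordinatewise. Qed.

Lemma vsub_vmax_le_complement x y :
  box ub x -> box ub y -> vle (vsub (vmax x y) x) (vsub ub x).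
Proof. move=> [_ xu] [_ yu] i; move: (xu i) (yu i); coordinatewise. Qed.

Lemma box_vadd_complement x y :
  box ub x -> box ub y -> vle y (vsub ub x) -> box ub (vadd y x).
Proof.
move=> [x0 _] [y0 _] yc; split=> i; move: (x0 i) (y0 i) (yc i); coordinatewise.
Qed.

End Box.

Section DRSubmodular.

Variables (n : nat) (ub : vec n) (f : vec n -> R).
Hypothesis f_DR : DR_submodular (box ub) f.

(* Adding [v] one coordinate at a time reduces [DR_submodular_vadd] to the
   coordinate-step inequality of the definition. *)
Definition trunc (v : vec n) (m : nat) : vec n :=
  fun j => if (j < m)%N then v j else 0.

Lemma trunc0 v : trunc v 0 = @vzero n.
Proof. by apply: functional_extensionality. Qed.

Lemma trunc_full v : trunc v n = v.
Proof. by apply: functional_extensionality => j; rewrite /trunc ltn_ord. Qed.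

Lemma vadd_truncS a v m (lt_mn : (m < n)%N) :
  vadd a (trunc v m.+1)
  = vadd (vadd a (trunc v m)) (unitv (Ordinal lt_mn) (v (Ordinal lt_mn))).
Proof.
apply: functional_extensionality => j; rewrite /vadd /trunc /unitv ltnS leq_eqVlt.
case: eqP => jm.
- have -> : j = Ordinal lt_mn by apply: val_inj.
  by rewrite eqxx ltnn /=; ring.
- have -> : (j == Ordinal lt_mn) = false by apply/eqP => /(congr1 val).
  by rewrite /=; case: (j < m)%N; ring.
Qed.

Lemma box_vadd_trunc a v m :
  box ub a -> vle (@vzero n) v -> box ub (vadd a v) -> box ub (vadd a (trunc v m)).
Proof.
move=> [a0 _] v0 [_ avu]; split=> j; move: (a0 j) (v0 j) (avu j);
rewrite /vadd /trunc /vzero; case: (j < m)%N; lra.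
Qed.

Lemma DR_submodular_vadd a b v :
  box ub a -> box ub b -> vle a b -> vle (@vzero n) v -> box ub (vadd b v) ->
  f (vadd a v) - f a >= f (vadd b v) - f b.
Proof.
move=> a_box b_box le_ab v0 bv_box.
have av_box : box ub (vadd a v).
  case: a_box bv_box => [a0 _] [_ bvu]; split=> j;
  move: (a0 j) (le_ab j) (v0 j) (bvu j); rewrite /vadd /vzero; lra.
rewrite -(trunc_full v).
suff grow m : (m <= n)%N ->
    f (vadd a (trunc v m)) - f a >= f (vadd b (trunc v m)) - f b.
  exact: grow.
elim: m => [|m IH] lt_mn.
  by rewrite trunc0 !vaddv0; lra.
have le_trunc : vle (vadd a (trunc v m)) (vadd b (trunc v m)).
  by move=> j; move: (le_ab j); rewrite /vadd; lra.
have := @f_DR _ _ (box_vadd_trunc m a_box v0 av_box) (box_vadd_trunc m b_box v0 bv_box)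
  le_trunc (Ordinal lt_mn) _ (v0 (Ordinal lt_mn)).
rewrite -!(vadd_truncS _ _ lt_mn).
move=> /(_ (box_vadd_trunc m.+1 a_box v0 av_box) (box_vadd_trunc m.+1 b_box v0 bv_box)).
have := IH (ltnW lt_mn); lra.
Qed.

Hypothesis f_nonneg : nonneg_on (box ub) f.

Lemma DR_vmin_vmax_bound x y z :
  box ub x -> box ub y -> box ub z -> vle z (vsub ub x) ->
  f y <= f (vmin x y) + f (vmax x y) + f (vmax z (vsub (vmax x y) x)).
Proof.
set w := vsub (vmax x y) x => xb yb zb zc.
have wb : box ub w := box_vsub_vmax xb yb.
have zwb := box_vmax zb wb.
have zwc : vle (vmax z w) (vsub ub x).
  by move=> i; move: (zc i) (vsub_vmax_le_complement xb yb i); rewrite /w; coordinatewise.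
have zwxb := box_vadd_complement xb zwb zwc.
have fy_step : f w - f (@vzero n) >= f y - f (vmin x y).
  rewrite -{1}(vadd0v w) -{1}(vadd_vmin_vsub_vmax x y).
  apply: DR_submodular_vadd (box_vzero xb) (box_vmin xb yb) _ wb.1 _.
    exact: (box_vmin xb yb).1.
  by rewrite vadd_vmin_vsub_vmax.
have fw_step : f (vmax x y) - f w >= f (vadd (vmax z w) x) - f (vmax z w).
  rewrite -vadd_vsub_vmax.
  apply: DR_submodular_vadd wb zwb _ xb.1 zwxb.
  by move=> i; exact: Rmax_r.
have := @f_nonneg _ (box_vzero xb); have := @f_nonneg _ zwxb; lra.
Qed.

End DRSubmodular.

Section StronglyDRSubmodular.

Variables (n : nat) (ub : vec n) (f : vec n -> R) (grad : vec n -> vec n) (mu : R).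
Hypothesis f_strong : strongly_DR_submodular (box ub) f grad mu.

Lemma strongly_DR_vmax_vmin x y : box ub x -> box ub y ->
  f (vmax x y) + f (vmin x y)
  <= 2 * f x + dot (vsub y x) (grad x) - mu / 2 * sqnorm (vsub x y).
Proof.
move=> xb yb.
have up := @f_strong x _ xb (or_introl (vsub_vmax_ge0 x y)).
have down := @f_strong x _ xb (or_intror (vsub_vmin_le0 x y)).
rewrite !vadd_vsub in up down.
rewrite -dot_vsub_vmax_vmin -(sqnorm_vsub_vmax_vmin x y).
have := up (box_vmax xb yb); have := down (box_vmin xb yb); lra.
Qed.

End StronglyDRSubmodular.

Theorem proposition1 (n : nat) (ub : vec n) (f : vec n -> R)
    (grad : vec n -> vec n) (mu : R) (P : vec n -> Prop)
    (xstar x z : vec n) (gP gQ : R) :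
  vle (@vzero n) ub ->
  differentiable_on_with_grad (box ub) f grad ->
  nonneg_on (box ub) f ->
  DR_submodular (box ub) f ->
  0 <= mu ->
  strongly_DR_submodular (box ub) f grad mu ->
  (forall y, P y -> box ub y) ->
  (exists y, P y) ->
  compact_set P ->
  convex_set P ->
  down_closed P ->
  P xstar -> (forall y, P y -> f y <= f xstar) ->
  P x ->
  let Q := fun y => P y /\ vle y (vsub ub x) in
  Q z ->
  let zstar := vsub (vmax x xstar) x in
  is_nonstationarity P grad x gP ->
  is_nonstationarity Q grad z gQ ->
  Rmax (f x) (f z) >=
    1 / 4 * (f xstar - gP - gQ)
    + mu / 8 * (sqnorm (vsub x xstar) + sqnorm (vsub z zstar)).
Proof.
move=> _ _ f_nonneg f_DR _ f_strong P_box _ _ _ P_down Pxstar _ Px Q [Pz zc] zstar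
  [_ gP_max] [_ gQ_max].
have xb := P_box _ Px; have xstarb := P_box _ Pxstar; have zb := P_box _ Pz.
have Qzstar : Q zstar.
  split; last exact: vsub_vmax_le_complement xb xstarb.
  exact: P_down Pxstar (vsub_vmax_ge0 x xstar) (vsub_vmax_le xb xstarb).
have zstarb := P_box _ Qzstar.1.
have := strongly_DR_vmax_vmin f_strong xb xstarb.
have := strongly_DR_vmax_vmin f_strong zb zstarb.
have := DR_vmin_vmax_bound f_DR f_nonneg xb xstarb zb zc.
have := f_nonneg _ (box_vmin zb zstarb).
have := gP_max _ Pxstar; have := gQ_max _ Qzstar.
have := Rmax_l (f x) (f z); have := Rmax_r (f x) (f z).
rewrite -/zstar; lra.
Qed.
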